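(* Let $G$ be a network and let $\mathfrak{F}$ be a sample of the free uniform spanning forest measure $\mathsf{FUSF}_G$ of $G$. Let $v$ be a vertex of $G$ and let $E$ be an element of the set $\{e: e^-=v \}$ of oriented edges emanating from $v$, chosen independently of $\mathfrak{F}$ and with probability proportional to its conductance. Then $U(\mathfrak{F},E)$ and $\mathfrak{F}$ have the same distribution.
   Context: A network is a locally finite connected multigraph $G=(V,E)$ with positive edge conductances $c(e)$; oriented edges $e$ go from the tail $e^-$ to the head $e^+$. The free uniform spanning forest $\mathsf{FUSF}_G$ of an infinite network is the weak limit of the uniform spanning tree measures $\mathsf{UST}_{G_n}$ on the finite subnetworks $G_n$ induced by an exhaustion $\langle V_n\rangle$ of $G$ (the UST of a finite network gives each spanning tree probability proportional to the product of its edge conductances). For a finite network, a spanning tree $t$ and an oriented edge $e$ that is not a self-loop, the direction $D(t,e)$ is the first edge of the unique simple path from $e^-$ to $e^+$ in $t$. For an infinite network with exhaustion $\langle V_n\rangle$ and $T_n$ a sample of $\mathsf{UST}_{G_n}$, the pairs $(T_n,D(T_n,e))$ converge in distribution to a limit $(\mathfrak{F},D(e))$, where $D(e)$ is an edge adjacent to $e^-$ and $\mathfrak{F}$ has law $\mathsf{FUSF}_G$. For an oriented edge $e$ and $\mathsf{FUSF}_G$-a.e. spanning forest $f$, the update $U(f,e)$ is defined as follows: if $e$ is a self-loop or already belongs to $f$, set $U(f,e)=f$; otherwise sample $D(e)$ from its conditional distribution given $\mathfrak{F}=f$ (using randomness independent of everything else) and set $U(f,e)=f\cup\{e\}\setminus\{D(e)\}$.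 *)

From HB Require Import structures.
From mathcomp Require Import all_boot all_order all_algebra.
From mathcomp Require Import finmap.
From mathcomp Require Import all_classical all_reals all_analysis.

Set Implicit Arguments.
Unset Strict Implicit.
Unset Printing Implicit Defensive.

Import Order.TTheory GRing.Theory Num.Theory.
Local Open Scope classical_set_scope.
Local Open Scope ring_scope.

(* An oriented edge is a pair (u, b) : U * bool; the
   orientation b = true goes from (ends u).1 to (ends u).2, b = false
   goes the other way. *)
Section Network.
Variables (V : choiceType) (U : countType) (ends : U -> V * V).

Definition oedge := (U * bool)%type.

Definition tail (e : oedge) : V := if e.2 then (ends e.1).1 else (ends e.1).2.
Definition head (e : oedge) : V := if e.2 then (ends e.1).2 else (ends e.1).1.
Definition selfloop (e : oedge) : bool := tail e == head e.

Fixpoint walk (F : set U) (x : V) (p : seq oedge) (y : V) : Prop :=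
  match p with
  | [::] => x = y
  | e :: p' => [/\ F e.1, tail e = x & walk F (head e) p' y]
  end.

Definition simple_path (F : set U) (x : V) (p : seq oedge) (y : V) : Prop :=
  walk F x p y /\ uniq (x :: map head p).

Definition cycle_in (F : set U) (x : V) (p : seq oedge) : Prop :=
  [/\ p <> [::], walk F x p x, uniq (map head p) & uniq (map fst p)].

Definition acyclic (F : set U) : Prop := forall x p, ~ cycle_in F x p.

Definition connected_on (F : set U) (W : set V) : Prop :=
  forall x y, W x -> W y -> exists p, walk F x p y.

Definition induced_edges (W : set V) : set U :=
  [set u | W (ends u).1 /\ W (ends u).2].

Definition spanning_tree (W : {fset V}) (t : {fset U}) : Prop :=
  [/\ [set` t] `<=` induced_edges [set` W],
      connected_on [set` t] [set` W] & acyclic [set` t]].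

Definition conf (t : {fset U}) : U -> bool := fun u => u \in t.

Definition direction_is (t : {fset U}) (e d : oedge) : Prop :=
  exists p, simple_path [set` t] (tail e) (d :: p) (head e).

Definition upd (f : U -> bool) (e d : oedge) : U -> bool :=
  fun u => if u == d.1 then false else if u == e.1 then true else f u.

Definition cylinders : set (set (U -> bool)) :=
  [set A | exists (S : {fset U}) (s : U -> bool),
      A = [set w | forall u, u \in S -> w u = s u]].

Definition Omega := g_sigma_algebraType cylinders.

Variables (R : realType) (c : U -> R).

Definition network : Prop :=
  [/\ (forall u, 0 < c u),
      (forall x, finite_set [set u | (ends u).1 = x \/ (ends u).2 = x]) &
      (forall x y, exists p, walk setT x p y)].

Definition exhaustion (W : nat -> {fset V}) : Prop :=
  [/\ (forall n, (W n `<=` W n.+1)%fset),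
      (forall x, exists n, x \in W n) &
      (forall n, connected_on (induced_edges [set` W n]) [set` W n])].

Definition tree_weight (t : {fset U}) : R := \prod_(u <- t) c u.

Definition ust (W : {fset V}) (B : set (U -> bool)) : R :=
  (\sum_(t \in [set t | spanning_tree W t /\ B (conf t)]) tree_weight t) /
  (\sum_(t \in [set t | spanning_tree W t]) tree_weight t).

Definition ust_dir (W : {fset V}) (e d : oedge) (B : set (U -> bool)) : R :=
  (\sum_(t \in [set t | [/\ spanning_tree W t, B (conf t) & direction_is t e d]])
      tree_weight t) /
  (\sum_(t \in [set t | spanning_tree W t]) tree_weight t).

Definition out_cond (x : V) : R :=
  \sum_(e \in [set e : oedge | tail e = x]) c e.1.

End Network.

From Pilot Require Import Defs.
From HB Require Import structures.
From mathcomp Require Import all_boot all_order all_algebra.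
From mathcomp Require Import finmap.
From mathcomp Require Import all_classical all_reals all_analysis.
From mathcomp Require Import ring lra.

Import Order.TTheory GRing.Theory Num.Theory.
Import numFieldNormedType.Exports.
Local Open Scope classical_set_scope.
Local Open Scope ring_scope.
Set Implicit Arguments.
Unset Strict Implicit.
Unset Printing Implicit Defensive.

(* Both laws are determined by their values on cylinder events, and the
   cylinders with a common base partition the configuration space, so it
   suffices to show P(F ∈ A) <= P(U(F,E) ∈ A) for every cylinder A.  This
   inequality is inherited from the finite networks G_n.  If d emanates from v
   and the spanning tree t of G_n avoids d, let e be the first edge of the path
   of t from d^- to d^+: then t' = t ∪ {d} \ {e} is a spanning tree with
   D(t', e) = d and U(t', e) = t, c(e) w(t') = c(d) w(t), and t is recovered
   from (e, t').  Summing over the edges d at v bounds UST_{G_n}(A) by the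
   UST-probability that the tree updated along an independent edge E (drawn
   proportionally to conductance) lies in A.  The bound passes to the limit by
   the independence of E and F and the choice of the law of D. *)

Section Walks.
Variables (V : choiceType) (U : countType) (ends : U -> V * V).
Local Notation oedge := (Defs.oedge U).
Local Notation tail := (Defs.tail ends).
Local Notation head := (Defs.head ends).
Local Notation walk := (Defs.walk ends).
Local Notation simple_path := (Defs.simple_path ends).

Definition flip (e : oedge) : oedge := (e.1, ~~ e.2).
Definition rev_walk (p : seq oedge) := rev (map flip p).

Lemma tail_flip e : tail (flip e) = head e.
Proof. by rewrite /Defs.tail /Defs.head /flip /=; case: e.2. Qed.

Lemma head_flip e : head (flip e) = tail e.
Proof. by rewrite /Defs.tail /Defs.head /flip /=; case: e.2. Qed.

Lemma oedge_fst_eq (e f : oedge) : f.1 = e.1 -> f = e \/ f = flip e.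
Proof. by case: e f => [u []] [u' []] /= ->; rewrite /flip /=; auto. Qed.

Lemma rev_walk_cons e p : rev_walk (e :: p) = rcons (rev_walk p) (flip e).
Proof. by rewrite /rev_walk map_cons rev_cons. Qed.

Lemma map_fst_rev_walk p : map fst (rev_walk p) = rev (map fst p).
Proof. by rewrite /rev_walk map_rev -map_comp. Qed.

Lemma walk_cat F x p y q z :
  walk F x p y -> walk F y q z -> walk F x (p ++ q) z.
Proof.
elim: p x => [|e p IH] x /=; first by move=> ->.
by case=> Fe te wp wq; split => //; apply: IH wq.
Qed.

Lemma walk_last F x p y : walk F x p y -> y = last x (map head p).
Proof. by elim: p x => [|e p IH] x /=; [move=> ->|case=> _ _ /IH]. Qed.

Lemma walk_cat_inv F x p q z : walk F x (p ++ q) z ->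
  walk F x p (last x (map head p)) /\ walk F (last x (map head p)) q z.
Proof. by elim: p x => [|e p IH] x //= [Fe te /IH[w1 w2]]. Qed.

Lemma walk_rcons F x p e y : walk F x (rcons p e) y <->
  [/\ walk F x p (tail e), F e.1 & head e = y].
Proof.
elim: p x => [|f p IH] x /=; first by split=> [[? ? ->]|[-> ? <-]].
by split=> [[? ? /IH[]]|[[? ? ?] ? ?]]; split=> //; apply/IH.
Qed.

Lemma walk_rev F x p y : walk F x p y -> walk F y (rev_walk p) x.
Proof.
elim: p x => [|e p IH] x /=; first by move=> ->.
case=> Fe te /IH wp; rewrite rev_walk_cons.
by apply/walk_rcons; rewrite tail_flip head_flip.
Qed.

Lemma walk_edge F x p y e : walk F x p y -> e \in p -> F e.1.
Proof.
elim: p x => [|f p IH] x //= [Ff _ wp].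
by rewrite inE => /orP[/eqP->|/(IH _ wp)].
Qed.

Lemma walk_sub_edges F G x p y :
  walk F x p y -> (forall e, e \in p -> G e.1) -> walk G x p y.
Proof.
elim: p x => [|f p IH] x //= [Ff tf wp] pG; split => //.
  by apply: pG; rewrite mem_head.
by apply: IH => // e ep; apply: pG; rewrite inE ep orbT.
Qed.

Lemma walk_subset (F G : set U) x p y :
  F `<=` G -> walk F x p y -> walk G x p y.
Proof. by move=> FG w; apply: (walk_sub_edges w) => e /(walk_edge w)/FG. Qed.

Lemma heads_rev_walk F x p y : walk F x p y ->
  y :: map head (rev_walk p) = rev (x :: map head p).
Proof.
elim: p x => [|e p IH] x /=; first by move=> ->.
case=> _ te /IH IHp.
by rewrite rev_walk_cons map_rcons -rcons_cons IHp head_flip te [in RHS]rev_cons.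
Qed.

Lemma walk_tail_mem F x p y f : walk F x p y -> f \in p ->
  tail f \in x :: map head p.
Proof.
elim: p x => [|e p IH] x //= [_ te wp].
rewrite inE => /orP[/eqP->|fp]; first by rewrite te mem_head.
by rewrite inE (IH _ wp fp) orbT.
Qed.

Lemma walk_head_mem F x p y : walk F x p y -> p <> [::] -> y \in map head p.
Proof. by move=> /walk_last ->; case: p => [//|e p _] /=; rewrite mem_last. Qed.

Lemma simple_path_uniq_edges F x p y :
  simple_path F x p y -> uniq (map fst p).
Proof.
elim: p x => [|e p IH] x //= [[Fe te wp]] /= /andP[xn /andP[hn up]].
rewrite (IH (head e)) ?andbT; last by split => //=; rewrite hn.
apply/mapP => -[f fp fe]; have [ef|ef] := oedge_fst_eq (esym fe).
  by move: hn; rewrite -ef map_f.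
by move: xn; rewrite -te -head_flip -ef inE map_f ?orbT.
Qed.

Lemma simple_path_rev F x p y :
  simple_path F x p y -> simple_path F y (rev_walk p) x.
Proof.
by case=> w u; split; [exact: walk_rev | rewrite (heads_rev_walk w) rev_uniq].
Qed.

Lemma simple_path_from_visited F a q y x :
  simple_path F a q y -> x \in a :: map head q ->
  exists q', simple_path F x q' y /\ {subset map fst q' <= map fst q}.
Proof.
elim: q a => [|f q IH] a; first by rewrite inE => sp /eqP ->; exists [::].
move=> sp; rewrite inE => /orP[/eqP ->|xq]; first by exists (f :: q); split.
case: sp => -[_ _ wq] /= /andP[_ uq].
have [q' [sq' sub]] := IH (head f) (conj wq uq) xq.
by exists q'; split => // u /sub; rewrite inE => ->; rewrite orbT.
Qed.

Lemma walk_shorten F x p y : walk F x p y ->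
  exists q, simple_path F x q y /\ {subset map fst q <= map fst p}.
Proof.
elim: p x => [|e p IH] x /=; first by move=> ->; exists [::].
case=> Fe te /IH [q [sq sub]].
have [xq|xNq] := boolP (x \in head e :: map head q).
  have [q' [sq' sub']] := simple_path_from_visited sq xq.
  by exists q'; split => // u /sub'/sub; rewrite inE => ->; rewrite orbT.
exists (e :: q); split; first by case: sq => wq uq; split => //=; rewrite xNq.
by move=> u; rewrite /= !inE => /orP[->//|/sub ->]; rewrite orbT.
Qed.

Lemma simple_path_nil F x p y :
  simple_path F x p y -> (p == [::]) = (x == y).
Proof.
case: p => [|e p] [w u]; first by rewrite (walk_last w) !eqxx.
apply/esym/negbTE/eqP => xy; move: u; rewrite /= xy.
by rewrite (walk_head_mem w).
Qed.

Lemma acyclic_bridge F a q : acyclic ends F -> F a.1 ->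
  walk F (head a) q (tail a) -> a.1 \in map fst q.
Proof.
move=> ac Fa w; apply/negPn/negP => aNq.
have [s [[ws us] sub]] := walk_shorten w.
apply: (ac (tail a) (a :: s)); split => //=.
by rewrite (simple_path_uniq_edges (conj ws us)) andbT; apply: contra aNq => /sub.
Qed.

Lemma simple_path_unique F x p q y : acyclic ends F ->
  simple_path F x p y -> simple_path F x q y -> p = q.
Proof.
move=> ac; elim: p x q => [|a p IH] x q sp sq.
  by apply/esym/eqP; rewrite (simple_path_nil sq) -(simple_path_nil sp).
case: q sq => [|b q] sq.
  by have := simple_path_nil sp; rewrite -(simple_path_nil sq).
have [ab|ab] := eqVneq a b.
  subst b; congr (_ :: _); apply: (IH (head a)).
    by case: sp => -[_ _ w] /= /andP[_ u]; split.
  by case: sq => -[_ _ w] /= /andP[_ u]; split.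
have [[[Fa ta wp] up] [[Fb tb wq] uq]] := (sp, sq).
have aNq : a.1 \notin map fst (b :: q).
  apply/mapP => -[f fbq /esym/oedge_fst_eq[]] fa; subst f.
    move: fbq; rewrite inE (negbTE ab) /= => aq.
    by move: uq; rewrite /= -ta (walk_tail_mem wq aq).
  by move: uq; rewrite -ta -head_flip cons_uniq (map_f head fbq).
have aNp : a.1 \notin map fst p by case/andP: (simple_path_uniq_edges sp).
have wbq : walk F (tail a) (b :: q) y by rewrite ta; case: sq.
have := acyclic_bridge ac Fa (walk_cat wp (walk_rev wbq)).
by rewrite map_cat mem_cat map_fst_rev_walk mem_rev (negbTE aNp) (negbTE aNq).
Qed.

Lemma cycle_split F x q1 f q2 : cycle_in ends F x (q1 ++ f :: q2) ->
  simple_path (fun u => F u /\ u <> f.1) (head f) (q2 ++ q1) (tail f).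
Proof.
case=> _ w uh uf; have [w1 /= [Ff tf w2]] := walk_cat_inv w.
split.
  rewrite tf; apply: (walk_sub_edges (walk_cat w2 w1)) => e eq; split.
    by apply: (walk_edge w); move: eq; rewrite !mem_cat inE => /orP[]->; rewrite ?orbT.
  move=> ef; move: uf; rewrite map_cat cat_uniq /= => /and3P[_ + /andP[+ _]].
  rewrite negb_or => /andP[nq1 _] nq2.
  by move: eq; rewrite mem_cat => /orP[] eq; [move: nq2|move: nq1];
    rewrite -ef map_f.
have -> : head f :: map head (q2 ++ q1) = map head (f :: q2) ++ map head q1.
  by rewrite /= map_cat.
by rewrite uniq_catC -map_cat.
Qed.
End Walks.

Section Exchange.
Variables (V : choiceType) (U : countType) (ends : U -> V * V).
Local Notation oedge := (Defs.oedge U).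
Local Notation tail := (Defs.tail ends).
Local Notation head := (Defs.head ends).
Local Notation walk := (Defs.walk ends).
Local Notation simple_path := (Defs.simple_path ends).

Definition exchange (t : {fset U}) (d e : oedge) : {fset U} :=
  ((d.1 |` t) `\ e.1)%fset.

Lemma in_exchange t d e u :
  (u \in exchange t d e) = (u != e.1) && ((u == d.1) || (u \in t)).
Proof. by rewrite !inE. Qed.

Lemma exchangeK t (d e : oedge) : d.1 \notin t -> e.1 \in t ->
  exchange (exchange t d e) e d = t.
Proof.
move=> dNt et; apply/fsetP => u; rewrite !in_exchange.
have [->|ud] := eqVneq u d.1; first by rewrite (negbTE dNt).
by have [->|ue] := eqVneq u e.1.
Qed.

Lemma simple_path_subset (F G : set U) x p y : F `<=` G ->
  simple_path F x p y -> simple_path G x p y.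
Proof. by move=> FG [w u]; split => //; apply: walk_subset w. Qed.

Lemma walk_reroute (F G : set U) (e : oedge) r x q y :
  walk G (tail e) r (head e) -> (forall u, F u -> u <> e.1 -> G u) ->
  walk F x q y -> exists q', walk G x q' y.
Proof.
move=> R FG; elim: q x => [|g q IH] x /=; first by move=> ->; exists [::].
case=> Fg tg /IH [q' wq'].
have [ge|gNe] := eqVneq g.1 e.1; last first.
  by exists (g :: q'); split => //; apply: FG => //; apply/eqP.
have [gE|gE] := oedge_fst_eq ge; subst g.
  by exists (r ++ q'); rewrite -tg; apply: walk_cat R wq'.
exists (rev_walk r ++ q'); rewrite -tg tail_flip.
by apply: walk_cat (walk_rev R) _; rewrite -head_flip.
Qed.

Section ExchangeTree.
Variables (t : {fset U}) (d e : oedge) (p : seq oedge).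
Hypothesis dNt : d.1 \notin t.
Hypothesis tree_path : simple_path [set` t] (tail d) (e :: p) (head d).

Lemma exchange_path :
  simple_path [set` exchange t d e] (tail e) (d :: rev_walk p) (head e).
Proof.
have [[et te wp] up] := tree_path.
have eNp : e.1 \notin map fst p by case/andP: (simple_path_uniq_edges tree_path).
have de : d.1 != e.1 by apply: contraNneq dNt => ->.
have wpT : walk [set` exchange t d e] (head e) p (head d).
  apply: (walk_sub_edges wp) => f fp; rewrite /= in_exchange (walk_edge wp fp).
  by rewrite orbT andbT; apply: contraNneq eNp => <-; rewrite map_f.
split; first by split; [rewrite /= in_exchange de eqxx | rewrite te | exact: walk_rev].
by rewrite [map _ _]/= (heads_rev_walk wp) te cons_uniq mem_rev rev_uniq -cons_uniq.
Qed.

Lemma exchange_connected (W : set V) :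
  connected_on ends [set` t] W -> connected_on ends [set` exchange t d e] W.
Proof.
move=> co x y xW yW; have [q wq] := co x y xW yW.
apply: (walk_reroute exchange_path.1 _ wq) => u /= ut ue.
by rewrite in_exchange ut orbT andbT; apply/eqP.
Qed.

Lemma exchange_acyclic : acyclic ends [set` t] -> acyclic ends [set` exchange t d e].
Proof.
move=> ac x q cq; have [dq|dNq] := boolP (d.1 \in map fst q); last first.
  apply: (ac x q); case: cq => q0 wq uq uq'; split => //.
  apply: (walk_sub_edges wq) => f fq; have := walk_edge wq fq.
  rewrite /= in_exchange => /andP[_ /orP[/eqP fd|//]].
  by move: dNq; rewrite -fd map_f.
(* A cycle through d would give a second path in t between the ends of d,
   avoiding e. *)
have [f fq df] := mapP dq; move: cq; case/splitPr: fq => q1 q2 /cycle_split sq.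
pose t' u := u \in t /\ u <> e.1.
have {}sq : simple_path t' (head f) (q2 ++ q1) (tail f).
  apply: simple_path_subset sq => u /= [+ uf]; rewrite in_exchange => /andP[/eqP ue].
  by case/orP => [/eqP ud|//]; exfalso; apply: uf; rewrite ud df.
have [s ss] : exists s, simple_path t' (tail d) s (head d).
  have [fd|fd] := oedge_fst_eq (esym df); subst f.
    by exists (rev_walk (q2 ++ q1)); apply: simple_path_rev.
  by exists (q2 ++ q1); rewrite -head_flip -[X in simple_path _ _ _ X]tail_flip.
have st' : simple_path [set` t] (tail d) s (head d).
  by apply: simple_path_subset ss => u [].
have es := simple_path_unique ac tree_path st'; subst s.
by case: ss => -[[_ /(_ erefl)]].
Qed.

End ExchangeTree.

Lemma spanning_tree_path (W : {fset V}) t x y : spanning_tree ends W t ->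
  x \in W -> y \in W -> x != y -> exists e p, simple_path [set` t] x (e :: p) y.
Proof.
case=> _ co _ xW yW xy; have [q wq] := co x y xW yW.
have [[|e p] [sp _]] := walk_shorten wq; last by exists e, p.
by move: (simple_path_nil sp); rewrite eqxx (negbTE xy).
Qed.

Lemma spanning_tree_exchange (W : {fset V}) t d e p :
  spanning_tree ends W t -> tail d \in W -> head d \in W -> d.1 \notin t ->
  simple_path [set` t] (tail d) (e :: p) (head d) ->
  spanning_tree ends W (exchange t d e) /\ direction_is ends (exchange t d e) e d.
Proof.
move=> [sub co ac] tdW hdW dNt sp.
split; last by exists (rev_walk p); exact: (exchange_path dNt sp).
split; [|exact: (exchange_connected dNt sp co) | exact: (exchange_acyclic sp ac)].
move=> u /=; rewrite in_exchange => /andP[_ /orP[/eqP ->|/sub//]].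
by move: tdW hdW; rewrite /Defs.tail /Defs.head; case: d.2.
Qed.

End Exchange.

Section FiniteSums.
Variable R : numDomainType.

Lemma ler_fsum (I : choiceType) (X : set I) (f g : I -> R) : finite_set X ->
  (forall i, X i -> f i <= g i) -> \sum_(i \in X) f i <= \sum_(i \in X) g i.
Proof.
move=> Xf fg; rewrite !fsbig_finite // big_seq [leRHS]big_seq.
by apply: ler_sum => i; rewrite in_fset_set // inE; exact: fg.
Qed.

Lemma le_fsbig_inj (I J : choiceType) (X : set I) (Y : set J) (h : I -> J)
    (f : I -> R) (g : J -> R) :
  finite_set Y -> set_inj X h -> h @` X `<=` Y ->
  (forall i, X i -> f i = g (h i)) -> (forall j, Y j -> 0 <= g j) ->
  \sum_(i \in X) f i <= \sum_(j \in Y) g j.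
Proof.
move=> Yf hinj hXY fg g0.
rewrite (eq_fsbigr (fun i => g (h i))); last by move=> i /set_mem/fg.
rewrite -(fsbig_image _ _ g hinj) (fsbigID (h @` X) Y) //.
have -> : Y `&` h @` X = h @` X by apply/setIidr.
by rewrite lerDl; apply: fsumr_ge0 => j [/g0].
Qed.

Lemma pair_fsbig_dep (I J : choiceType) (X : set I) (Y : I -> set J) (Z : set J)
    (g : I -> J -> R) :
  finite_set X -> finite_set Z -> (forall i, Y i `<=` Z) ->
  \sum_(i \in X) \sum_(j \in Y i) g i j =
  \sum_(k \in [set k | X k.1 /\ Y k.1 k.2]) g k.1 k.2.
Proof.
move=> Xf Zf YZ; pose h i j := if `[< Y i j >] then g i j else 0.
transitivity (\sum_(i \in X) \sum_(j \in Z) h i j).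
  apply: eq_fsbigr => i _.
  rewrite (eq_fsbigr (h i)); last by move=> j; rewrite inE /h => Yj; rewrite asboolT.
  by apply: fsbig_widen => // j [_ Yj]; rewrite /preimage /= /h; case: asboolP.
rewrite pair_fsbig // [RHS](eq_fsbigr (fun k => h k.1 k.2)); last first.
  by move=> k; rewrite inE /h => -[_ ?]; rewrite asboolT.
apply/esym/fsbig_widen => [k [Xk Yk]|k [[Xk _] /not_andP[//|Yk]]].
  exact: (conj Xk (YZ _ _ Yk)).
by rewrite /preimage /= /h; case: asboolP.
Qed.

End FiniteSums.

Lemma cvg_fsum (R : numFieldType) (I : choiceType) (X : set I)
    (f : I -> nat -> R) (a : I -> R) :
  finite_set X -> (forall i, X i -> f i n @[n --> \oo] --> a i) ->
  \sum_(i \in X) f i n @[n --> \oo] --> \sum_(i \in X) a i.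
Proof.
move=> Xf fa; rewrite fsbig_finite // big_seq_cond.
under eq_cvg do rewrite fsbig_finite // big_seq_cond.
apply: cvg_big => [|i /andP[+ _]]; first exact: add_continuous.
by rewrite in_fset_set // inE; exact: fa.
Qed.

Section Configurations.
Variables (V : choiceType) (U : countType) (ends : U -> V * V).
Local Notation oedge := (Defs.oedge U).

Definition cyl (S : {fset U}) (s : U -> bool) : set (U -> bool) :=
  [set w | forall u, u \in S -> w u = s u].

(* Together with the empty set, the cylinders form a pi-system. *)
Definition cylinders0 (B : set (U -> bool)) := cylinders B \/ B = set0.

Definition upd_trivial (d : oedge) : set (U -> bool) :=
  [set w | selfloop ends d || w d.1].

Definition upd_preimage (A : set (U -> bool)) (e d : oedge) : set (U -> bool) :=
  [set w | ~~ selfloop ends e /\ ~~ w e.1 /\ A (upd w e d)].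

Lemma cylinders_cyl S s : cylinders (cyl S s).
Proof. by exists S, s. Qed.

Lemma cylinders_nonempty (B : set (U -> bool)) : cylinders B -> exists w, B w.
Proof. by case=> S [s ->]; exists s. Qed.

Lemma cylinders0_cylI S1 s1 S2 s2 : cylinders0 (cyl S1 s1 `&` cyl S2 s2).
Proof.
have [agree|disagree] := pselect (forall u, u \in S1 -> u \in S2 -> s1 u = s2 u).
  left; exists (S1 `|` S2)%fset, (fun u => if u \in S1 then s1 u else s2 u).
  apply/seteqP; split => w.
    move=> [w1 w2] u; rewrite inE => /orP[u1|u2]; first by rewrite u1 w1.
    by case: ifP => u1; [rewrite w1|rewrite w2].
  move=> w12; split => u uS; have := w12 u; rewrite inE uS ?orbT => /(_ isT) //.
  by case: ifP => // u1 ->; rewrite agree.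
right; apply/seteqP; split => // w [w1 w2]; apply: disagree => u u1 u2.
by rewrite -w1 // w2.
Qed.

Lemma cylinders0I B1 B2 : cylinders0 B1 -> cylinders0 B2 -> cylinders0 (B1 `&` B2).
Proof.
case=> [[S1 [s1 ->]]|->]; last by right; rewrite set0I.
case=> [[S2 [s2 ->]]|->]; last by right; rewrite setI0.
exact: cylinders0_cylI.
Qed.

Lemma cylinders0_trivial B d : cylinders0 B -> cylinders0 (B `&` upd_trivial d).
Proof.
move=> cB; have [sd|nsd] := boolP (selfloop ends d).
  suff -> : B `&` upd_trivial d = B by [].
  by apply/setIidl => w _; rewrite /upd_trivial /= sd.
have -> : upd_trivial d = cyl [fset d.1]%fset (fun=> true).
  apply/seteqP; split => w; rewrite /upd_trivial /= (negbTE nsd) /=.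
    by move=> wd u; rewrite inE => /eqP ->.
  by move/(_ d.1); rewrite inE eqxx => /(_ isT).
by apply: cylinders0I => //; left; exact: cylinders_cyl.
Qed.

Lemma cylinders0_preimage B e d : cylinders0 B -> cylinders0 (upd_preimage B e d).
Proof.
case=> [[S [s ->]]|->]; last by right; apply/seteqP; split => // w [_ []].
have [se|nse] := boolP (selfloop ends e).
  by right; apply/seteqP; split => // w []; rewrite se.
have [[sd se]|incons] := pselect ((d.1 \in S -> s d.1 = false) /\
                                 (e.1 \in S -> e.1 != d.1 -> s e.1 = true)).
  left; exists (e.1 |` ((S `\ d.1) `\ e.1))%fset,
    (fun u => if u == e.1 then false else s u).
  apply/seteqP; split => w.
    move=> [_ [we ws]] u; rewrite !inE.
    have [->|ue] := eqVneq u e.1; first by rewrite (negbTE we).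
    by move=> /= /andP[ud uS]; rewrite -ws // /upd (negbTE ud) (negbTE ue).
  move=> ws; split => //; split.
    by have := ws e.1; rewrite !inE eqxx => /(_ isT) ->.
  move=> u uS; rewrite /upd.
  have [ud|ud] := eqVneq u d.1; first by subst u; rewrite (sd uS).
  have [ue|ue] := eqVneq u e.1; first by subst u; rewrite (se uS ud).
  by have := ws u; rewrite !inE (negbTE ue) (negbTE ud) uS /= => /(_ isT) ->.
right; apply/seteqP; split => // w [_ [_ ws]]; apply: incons; split.
  by move=> dS; rewrite -(ws _ dS) /upd eqxx.
by move=> eS ed; rewrite -(ws _ eS) /upd (negbTE ed) eqxx.
Qed.

Lemma upd_conf_exchange t (d e : oedge) : d.1 \notin t -> e.1 \in t ->
  upd (conf (exchange t d e)) e d = conf t.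
Proof.
move=> dNt et; apply/funext => u; rewrite /upd /conf in_exchange.
have [->|ud] := eqVneq u d.1; first by rewrite (negbTE dNt).
by have [->|ue] := eqVneq u e.1; rewrite ?et ?eqxx.
Qed.

End Configurations.

Section SpanningTreeCount.
Variables (R : realType) (V : choiceType) (U : countType) (ends : U -> V * V)
  (c : U -> R).
Hypothesis c_gt0 : forall u, 0 < c u.
Hypothesis locally_finite :
  forall x, finite_set [set u | (ends u).1 = x \/ (ends u).2 = x].
Local Notation oedge := (Defs.oedge U).
Local Notation tail := (Defs.tail ends).
Local Notation head := (Defs.head ends).
Local Notation spanning_tree := (spanning_tree ends).
Local Notation direction_is := (direction_is ends).

Definition out_edges (x : V) : set oedge := [set e | tail e = x].

Definition induced_subgraphs (W : {fset V}) : set {fset U} :=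
  [set t : {fset U} | [set` t] `<=` induced_edges ends [set` W]].

(* [d] is a junk value, returned when [t] has no path joining the ends of [d]. *)
Definition first_edge (t : {fset U}) (d : oedge) : oedge := xget d (direction_is t d).

Definition ust_num (W : {fset V}) (B : set (U -> bool)) : R :=
  \sum_(t \in [set t | spanning_tree W t /\ B (conf t)]) tree_weight c t.

Definition ust_dir_num (W : {fset V}) (e d : oedge) (B : set (U -> bool)) : R :=
  \sum_(t \in [set t | [/\ spanning_tree W t, B (conf t) & direction_is t e d]])
    tree_weight c t.

Lemma finite_out_edges x : finite_set (out_edges x).
Proof.
apply: sub_finite_set (finite_setX (locally_finite x) (@finite_finset bool setT)).
by move=> [u []] <-; split => //=; [left|right].
Qed.

Lemma finite_induced_edges (W : {fset V}) : finite_set (induced_edges ends [set` W]).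
Proof.
apply: sub_finite_set (bigcup_finite (finite_fset W) (fun x _ => locally_finite x)).
by move=> u [W1 W2]; exists (ends u).1 => //=; left.
Qed.

Lemma finite_induced_subgraphs (W : {fset V}) : finite_set (induced_subgraphs W).
Proof.
pose IE := fset_set (induced_edges ends [set` W]).
apply: sub_finite_set (finite_fset (fpowerset IE)) => t tW /=.
rewrite fpowersetE; apply/fsubsetP => u ut.
by rewrite in_fset_set ?inE; [exact: tW | exact: finite_induced_edges].
Qed.

Lemma finite_spanning_trees (W : {fset V}) (P : {fset U} -> Prop) :
  finite_set [set t | spanning_tree W t /\ P t].
Proof. by apply: sub_finite_set (finite_induced_subgraphs W) => t [[]]. Qed.

Lemma tree_weight_ge0 t : 0 <= tree_weight c t.
Proof. by apply: prodr_ge0 => u _; exact/ltW. Qed.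

Lemma ust_dir_num_ge0 W e d B : 0 <= ust_dir_num W e d B.
Proof. by apply: fsumr_ge0 => t _; exact: tree_weight_ge0. Qed.

Lemma tree_weight_exchange t (d e : oedge) : d.1 \notin t -> e.1 \in t ->
  c e.1 * tree_weight c (exchange t d e) = c d.1 * tree_weight c t.
Proof.
move=> dNt et; have de : d.1 != e.1 by apply: contraNneq dNt => ->.
by rewrite /tree_weight -big_fsetD1 ?big_fsetU1 // !inE et orbT.
Qed.

Lemma first_edge_direction (W : {fset V}) t d : spanning_tree W t ->
  tail d \in W -> head d \in W -> ~~ selfloop ends d ->
  direction_is t d (first_edge t d).
Proof.
by move=> stt tdW hdW nsd; apply: xgetPex; exact: spanning_tree_path stt tdW hdW nsd.
Qed.

Lemma direction_edge t d e : direction_is t d e ->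
  [/\ e.1 \in t, tail e = tail d & ~~ selfloop ends e].
Proof.
case=> p [[et te _] /= /andP[hNt _]]; split => //.
by rewrite /selfloop te; apply: contra hNt => /eqP ->; exact: mem_head.
Qed.

Lemma exchange_direction_tree (W : {fset V}) (A : set (U -> bool)) t d e :
  spanning_tree W t -> tail d \in W -> head d \in W -> d.1 \notin t ->
  A (conf t) -> direction_is t d e ->
  [/\ spanning_tree W (exchange t d e),
      upd_preimage ends A e d (conf (exchange t d e))
    & direction_is (exchange t d e) e d].
Proof.
move=> stt tdW hdW dNt At dir; have [et _ nse] := direction_edge dir.
case: dir => p sp; have [stT dirT] := spanning_tree_exchange stt tdW hdW dNt sp.
split => //; split => //; split; first by rewrite /conf in_exchange eqxx.
by rewrite upd_conf_exchange.
Qed.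

Lemma exchange_count (W : {fset V}) v A d :
  v \in W -> (forall e, tail e = v -> head e \in W) -> tail d = v ->
  c d.1 * ust_num W (A `&` ~` upd_trivial ends d) <=
  \sum_(e \in out_edges v) c e.1 * ust_dir_num W e d (upd_preimage ends A e d).
Proof.
move=> vW hW td; rewrite /ust_num mulr_fsumr; set X := [set t | _ /\ _].
have [sd|nsd] := boolP (selfloop ends d).
  have -> : X = set0.
    by apply/seteqP; split => // t [_ [_]]; apply; rewrite /upd_trivial /= sd.
  rewrite fsbig_set0; apply: fsumr_ge0 => e _.
  by rewrite mulr_ge0 ?ust_dir_num_ge0 ?ltW.
have tdW : tail d \in W by rewrite td.
have Xtree t : X t -> [/\ spanning_tree W t, A (conf t), d.1 \notin t
                          & direction_is t d (first_edge t d)].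
  move=> [stt [At /negP]]; rewrite /upd_trivial /conf /= negb_or => /andP[_ dNt].
  by split => //; apply: first_edge_direction stt tdW (hW _ td) nsd.
pose Y := [set k : oedge * {fset U} | out_edges v k.1 /\
  [/\ spanning_tree W k.2, upd_preimage ends A k.1 d (conf k.2)
    & direction_is k.2 k.1 d]].
have -> : \sum_(e \in out_edges v) c e.1 * ust_dir_num W e d (upd_preimage ends A e d)
    = \sum_(k \in Y) c k.1.1 * tree_weight c k.2.
  under eq_fsbigr do rewrite /ust_dir_num mulr_fsumr.
  apply: pair_fsbig_dep (finite_out_edges v) (finite_induced_subgraphs W) _.
  by move=> e t [[]].
(* The exchange is undone by exchangeK, so this map is injective. *)
apply: (le_fsbig_inj (h := fun t => (first_edge t d, exchange t d (first_edge t d)))).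
- apply: sub_finite_set (finite_setX (finite_out_edges v) (finite_induced_subgraphs W)).
  by move=> k [? [[]]].
- move=> t1 t2 /set_mem/Xtree[_ _ d1 /direction_edge[e1 _ _]].
  move=> /set_mem/Xtree[_ _ d2 /direction_edge[e2 _ _]] [E T].
  by rewrite -(exchangeK d1 e1) -(exchangeK d2 e2) T E.
- move=> _ [t /Xtree[stt At dNt dir] <-]; split.
    by have [_ te _] := direction_edge dir; rewrite /out_edges /= te.
  exact: exchange_direction_tree stt tdW (hW _ td) dNt At dir.
- by move=> t /Xtree[_ _ dNt /direction_edge[et _ _]] /=; rewrite tree_weight_exchange.
- by move=> k _; rewrite mulr_ge0 ?tree_weight_ge0 ?ltW.
Qed.

Lemma ust_num_setID W (A K : set (U -> bool)) :
  ust_num W A = ust_num W (A `&` K) + ust_num W (A `&` ~` K).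
Proof.
rewrite /ust_num -fsbigU0; [|exact: finite_spanning_trees..|].
  apply: eq_fsbigl; apply/seteqP; split => [t [stt At]|t [[? [? _]]|[? [? _]]]] //.
  by have [Kt|nKt] := pselect (K (conf t)); [left|right].
by move=> t [[_ [_ Kt]] [_ [_ nKt]]].
Qed.

Lemma ust_num_le (W : {fset V}) v A :
  v \in W -> (forall e, tail e = v -> head e \in W) ->
  out_cond ends c v * ust_num W A <=
  \sum_(e \in out_edges v) c e.1 * (ust_num W (A `&` upd_trivial ends e) +
     \sum_(d \in out_edges v) ust_dir_num W e d (upd_preimage ends A e d)).
Proof.
move=> vW hW; have Of := finite_out_edges v.
rewrite /out_cond mulr_fsuml.
under eq_fsbigr => e _ do rewrite (ust_num_setID W A (upd_trivial ends e)) mulrDr.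
under [leRHS]eq_fsbigr do rewrite mulrDr.
rewrite !fsbig_split // lerD2l.
under [leRHS]eq_fsbigr do rewrite mulr_fsumr.
rewrite exchange_fsbig //.
by apply: ler_fsum => // d; exact: exchange_count.
Qed.

Lemma ust_le (W : {fset V}) v A :
  v \in W -> (forall e, tail e = v -> head e \in W) -> 0 < out_cond ends c v ->
  ust ends c W A <= \sum_(e \in out_edges v)
    (c e.1 / out_cond ends c v * ust ends c W (A `&` upd_trivial ends e) +
     \sum_(d \in out_edges v)
       c e.1 / out_cond ends c v * ust_dir ends c W e d (upd_preimage ends A e d)).
Proof.
move=> vW hW C_gt0; set C := out_cond ends c v.
set Z := \sum_(t \in [set t | spanning_tree W t]) tree_weight c t.
have ustE B : ust ends c W B = ust_num W B / Z by [].
have dirE e d B : ust_dir ends c W e d B = ust_dir_num W e d B / Z by [].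
have Z_ge0 : 0 <= Z by apply: fsumr_ge0 => t _; exact: tree_weight_ge0.
have k_ge0 : 0 <= C^-1 * Z^-1 by apply: mulr_ge0; rewrite invr_ge0 //; exact: ltW.
rewrite ustE -[ust_num W A / Z]mul1r -(divff (lt0r_neq0 C_gt0)) -mulrACA.
rewrite (eq_fsbigr (fun e => c e.1 * (ust_num W (A `&` upd_trivial ends e) +
    \sum_(d \in out_edges v) ust_dir_num W e d (upd_preimage ends A e d)) *
    (C^-1 * Z^-1))); last first.
  move=> e _; rewrite ustE; under eq_fsbigr do rewrite dirE.
  by rewrite -mulr_fsumr -mulr_fsuml; ring.
by rewrite -mulr_fsuml ler_wpM2r // ust_num_le.
Qed.

End SpanningTreeCount.

Section CylinderLaws.
Variables (R : realType) (U : countType) (dT : measure_display) (T : measurableType dT)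
  (P : probability T R).

Lemma measurable_cylinders0 (B : set (Omega U)) : cylinders0 B -> measurable B.
Proof. by case=> [cB|->//]; exact: sub_sigma_algebra. Qed.

Lemma measurable_cyl S s : measurable (cyl S s : set (Omega U)).
Proof. by apply: sub_sigma_algebra; exact: cylinders_cyl. Qed.

Lemma probability_fineK (A : set T) : measurable A -> (fine (P A))%:E = P A.
Proof. by move=> mA; rewrite fineK // fin_num_measure. Qed.

Lemma cyl_fsetD1 (S : {fset U}) s u : u \in S ->
  let s' x := if x == u then ~~ s u else s x in
  cyl (S `\ u)%fset s = cyl S s `|` cyl S s' /\ cyl S s `&` cyl S s' = set0.
Proof.
move=> uS s'; split; apply/seteqP; split => w.
- move=> ws; have [wu|wu] := boolP (w u == s u); [left|right] => x xS.
    by have [->|xu] := eqVneq x u; [exact/eqP | apply: ws; rewrite !inE xu].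
  rewrite /s'; have [->|xu] := eqVneq x u; last by apply: ws; rewrite !inE xu.
  by move: wu; case: (w u); case: (s u).
- by move=> [ws|ws] x; rewrite !inE => /andP[xu xS]; rewrite ws // /s' (negbTE xu).
- by move=> [/(_ u uS) + /(_ u uS)]; rewrite /s' eqxx => ->; case: (s u).
- by [].
Qed.

Section TwoLaws.
Variables (X Y : T -> Omega U).
Hypotheses (mX : measurable_fun setT X) (mY : measurable_fun setT Y).

Let mpre (Z : T -> Omega U) (B : set (Omega U)) :
  measurable_fun setT Z -> measurable B -> measurable (Z @^-1` B).
Proof. by move=> mZ mB; rewrite -[Z @^-1` B]setTI; exact: mZ. Qed.

Lemma eq_cylinder_law_of_le :
  (forall B, cylinders B -> (P (X @^-1` B) <= P (Y @^-1` B))%E) ->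
  forall S s, P (X @^-1` cyl S s) = P (Y @^-1` cyl S s).
Proof.
move=> XY.
have mcyl (Z : T -> Omega U) (S : {fset U}) s :
    measurable_fun setT Z -> measurable (Z @^-1` cyl S s).
  by move=> mZ; apply: mpre => //; exact: measurable_cyl.
suff eq_fine S s : fine (P (X @^-1` cyl S s)) = fine (P (Y @^-1` cyl S s)).
  move=> S s; rewrite -[LHS]probability_fineK; last exact: mcyl.
  rewrite -[RHS]probability_fineK; last exact: mcyl.
  by congr (_%:E); exact: eq_fine.
move: {2}#|` S| (erefl #|` S|) => n; elim: n S s => [|n IH] S s.
  move/cardfs0_eq => ->; have -> : cyl fset0 s = setT by apply/seteqP; split.
  by rewrite !preimage_setT.
move=> Sn; have /fset0Pn[u uS] : S != fset0 by rewrite -cardfs_gt0 Sn.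
have /IH : #|` (S `\ u)%fset| = n by move: Sn; rewrite (cardfsD1 u) uS add1n => -[].
move/(_ s); have [-> disj] := cyl_fsetD1 s uS; set s' := fun x => _.
have split_fine (Z : T -> Omega U) : measurable_fun setT Z ->
    fine (P (Z @^-1` (cyl S s `|` cyl S s'))) =
    fine (P (Z @^-1` cyl S s)) + fine (P (Z @^-1` cyl S s')).
  move=> mZ; rewrite preimage_setU measureU ?fineD ?fin_num_measure //;
    try exact: mcyl _ _ _ mZ.
  by rewrite -preimage_setI disj preimage_set0.
have le_fine B : cylinders B -> fine (P (X @^-1` B)) <= fine (P (Y @^-1` B)).
  move=> cB; have mB : measurable (B : set (Omega U)) by exact: sub_sigma_algebra.
  by rewrite -lee_fin !probability_fineK ?XY //; exact: mpre.
rewrite !split_fine //.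
(* Equal sums of pairwise ordered terms force equal terms. *)
have := le_fine _ (cylinders_cyl S s); have := le_fine _ (cylinders_cyl S s').
lra.
Qed.

Lemma eq_law_of_cylinders :
  (forall B, cylinders B -> P (X @^-1` B) = P (Y @^-1` B)) ->
  forall A, measurable A -> P (X @^-1` A) = P (Y @^-1` A).
Proof.
move=> XY A mA.
have gen : @measurable _ (Omega U) = <<s @cylinders0 U >>.
  apply/seteqP; split; first by apply: sub_sigma_algebra2 => B cB; left.
  apply: smallest_sub; first exact: sigma_algebra_measurable.
  by move=> B; exact: measurable_cylinders0.
apply: (@measure_unique _ _ (Omega U) _ (fun=> setT) gen _ _ _
  (pushforward P X) (pushforward P Y)) => //.
- by move=> B1 B2; exact: cylinders0I.
- by move=> _; left; exists fset0, (fun=> true); apply/seteqP; split.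
- by apply/seteqP; split => // w _; exists 0%N.
- by move=> B [cB|->]; [exact: (XY _ cB) | rewrite !measure0].
- move=> _; change (P (X @^-1` setT) < +oo)%E.
  by rewrite preimage_setT probability_setT ltry.
Qed.

End TwoLaws.
End CylinderLaws.

Section UpdateInvariance.
Variables (R : realType) (V : choiceType) (U : countType)
  (ends : U -> V * V) (c : U -> R) (W : nat -> {fset V})
  (dT : measure_display) (T : measurableType dT) (P : probability T R)
  (F : T -> Omega U) (v : V) (E D : T -> oedge U).
Hypotheses (G_network : network ends c) (W_exhaustion : exhaustion ends W)
  (mF : measurable_fun setT F)
  (mE : forall e, measurable (E @^-1` [set e]))
  (mD : forall d, measurable (D @^-1` [set d]))
  (F_fusf : forall A, cylinders A ->
     (fun n => ust ends c (W n) A) @ \oo --> fine (P (F @^-1` A)))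
  (E_tail : forall w, tail ends (E w) = v)
  (E_law : forall e, tail ends e = v ->
     P (E @^-1` [set e]) = (c e.1 / out_cond ends c v)%:E)
  (EF_indep : forall e (A : set (Omega U)), measurable A ->
     P (E @^-1` [set e] `&` F @^-1` A) =
     (P (E @^-1` [set e]) * P (F @^-1` A))%E)
  (D_direction : forall e d A, ~~ selfloop ends e -> cylinders A ->
     (forall w, A w -> ~~ w e.1) ->
     (fun n => fine (P (E @^-1` [set e])) * ust_dir ends c (W n) e d A)
       @ \oo -->
     fine (P (E @^-1` [set e] `&` F @^-1` A `&` D @^-1` [set d]))).

Local Notation oedge := (Defs.oedge U).
Local Notation tail := (Defs.tail ends).
Local Notation head := (Defs.head ends).

Definition upd_forest w : Omega U :=
  if selfloop ends (E w) || F w (E w).1 then F w else upd (F w) (E w) (D w).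

Let c_gt0 u : 0 < c u. Proof. by case: G_network. Qed.

Let locally_finite x : finite_set [set u | (ends u).1 = x \/ (ends u).2 = x].
Proof. by case: G_network. Qed.

Let finite_out_v : finite_set (out_edges ends v).
Proof. exact: finite_out_edges. Qed.

Let mFpre (B : set (Omega U)) : measurable B -> measurable (F @^-1` B).
Proof. by move=> mB; rewrite -[F @^-1` B]setTI; exact: mF. Qed.

Lemma preimage_upd_forest (B : set (Omega U)) : upd_forest @^-1` B =
  \bigcup_e (E @^-1` [set e] `&` (F @^-1` (B `&` upd_trivial ends e) `|`
     \bigcup_d (F @^-1` upd_preimage ends B e d `&` D @^-1` [set d]))).
Proof.
apply/seteqP; split => w.
  rewrite /upd_forest /preimage /=; case: ifPn => K Bw; exists (E w) => //.
    by split => //; left.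
  split => //; right; exists (D w) => //; split => //.
  by move: K; rewrite negb_or => /andP[? ?].
move=> [e _ [/= Ee [[BF KF]|[d _ [[ns [nF BU]] /= De]]]]]; rewrite /upd_forest /= Ee.
  by rewrite ifT.
by rewrite ifF ?De // (negbTE ns) (negbTE nF).
Qed.

Lemma measurable_upd_forest : measurable_fun setT upd_forest.
Proof.
apply: (@measurability _ _ T (Omega U) setT upd_forest (@cylinders U)) => //.
move=> _ [B cB <-]; rewrite setTI preimage_upd_forest.
apply: countable_bigcupT_measurable; first exact: countableP.
move=> e; apply: measurableI => //; apply: measurableU.
  exact: mFpre (measurable_cylinders0 (cylinders0_trivial ends e (or_introl cB))).
apply: countable_bigcupT_measurable; first exact: countableP.
move=> d; apply: measurableI => //.
exact: mFpre (measurable_cylinders0 (cylinders0_preimage ends e d (or_introl cB))).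
Qed.

Lemma out_cond_gt0 : 0 < out_cond ends c v.
Proof.
have [w _] : exists w : T, True.
  apply: contrapT => nT; have := probability_setT P.
  have -> : [set: T] = set0 by apply/seteqP; split => // w _; apply: nT; exists w.
  by rewrite measure0 => /esym/eqP; rewrite eqe oner_eq0.
rewrite /out_cond (fsbigD1 (E w)) //=; apply: lt_le_trans (c_gt0 (E w).1) _.
by rewrite lerDl; apply: fsumr_ge0 => e _; exact/ltW.
Qed.

Lemma exhaustion_eventually (s : seq V) :
  \forall n \near \oo, all (fun x => x \in W n) s.
Proof.
case: W_exhaustion => W_mono W_cover _.
have W_le m n : (m <= n)%N -> (W m `<=` W n)%fset.
  elim: n => [|n IH]; first by rewrite leqn0 => /eqP ->.
  rewrite leq_eqVlt => /orP[/eqP -> //|]; rewrite ltnS => /IH mn.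
  exact: fsubset_trans mn (W_mono n).
elim: s => [|x s IH]; first exact: nearW.
have [m xm] := W_cover x; near=> n => /=; apply/andP; split; last by near: n.
by apply: (fsubsetP (W_le m n _)) xm; near: n; exists m.
Unshelve. all: by end_near.
Qed.

Let pE e := fine (P (E @^-1` [set e])).

Lemma cvg_ust_cylinders0 (B : set (Omega U)) : cylinders0 B ->
  (fun n => ust ends c (W n) B) @ \oo --> fine (P (F @^-1` B)).
Proof.
case=> [cB|->]; first exact: F_fusf.
rewrite preimage_set0 measure0 /=.
have -> : (fun n => ust ends c (W n) set0) = fun=> 0.
  by apply/funext => n; rewrite /ust fsbig1 ?mul0r // => t [_ []].
exact: cvg_cst.
Qed.

Lemma cvg_ust_dir_preimage (A : set (Omega U)) e d : cylinders A ->
  (fun n => pE e * ust_dir ends c (W n) e d (upd_preimage ends A e d)) @ \oo -->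
  fine (P (E @^-1` [set e] `&` F @^-1` upd_preimage ends A e d `&` D @^-1` [set d])).
Proof.
move=> cA; have [cX|X0] := cylinders0_preimage ends e d (or_introl cA).
  have [w [nse _]] := cylinders_nonempty cX.
  by apply: D_direction => // w' [_ []].
rewrite X0 preimage_set0 setI0 set0I measure0 /=.
have -> : (fun n => pE e * ust_dir ends c (W n) e d set0) = fun=> 0.
  by apply/funext => n; rewrite /ust_dir fsbig1 ?mul0r ?mulr0 // => t [_ []].
exact: cvg_cst.
Qed.

Section LowerBound.
Variable A : set (Omega U).
Hypothesis cA : cylinders A.

Let stay e := E @^-1` [set e] `&` F @^-1` (A `&` upd_trivial ends e).
Let move e d :=
  E @^-1` [set e] `&` F @^-1` upd_preimage ends A e d `&` D @^-1` [set d].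
Let bound := \sum_(e \in out_edges ends v)
  (pE e * fine (P (F @^-1` (A `&` upd_trivial ends e))) +
   \sum_(d \in out_edges ends v) fine (P (move e d))).

Let mA_trivial e : measurable (F @^-1` (A `&` upd_trivial ends e)).
Proof.
exact: mFpre (measurable_cylinders0 (cylinders0_trivial ends e (or_introl cA))).
Qed.

Let mstay e : measurable (stay e).
Proof. exact: measurableI. Qed.

Let mmove e d : measurable (move e d).
Proof.
apply: measurableI => //; apply: measurableI => //.
exact: mFpre (measurable_cylinders0 (cylinders0_preimage ends e d (or_introl cA))).
Qed.

Lemma fusf_le_bound : fine (P (F @^-1` A)) <= bound.
Proof.
apply: (ler_cvg_to (F_fusf cA)).
  apply: cvg_fsum => // e _; apply: cvgD.
    apply: cvgM; first exact: cvg_cst.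
    exact: cvg_ust_cylinders0 (cylinders0_trivial ends e (or_introl cA)).
  by apply: cvg_fsum => // d _; exact: cvg_ust_dir_preimage.
near=> n.
have /andP[vW hW] :
    all (fun x => x \in W n) (v :: map head (fset_set (out_edges ends v))).
  by near: n; exact: exhaustion_eventually.
apply: le_trans (ust_le c_gt0 locally_finite A vW _ out_cond_gt0) _.
  move=> e te; move/allP: hW; apply; apply: map_f.
  by rewrite in_fset_set // inE.
rewrite le_eqVlt; apply/orP; left; apply/eqP/eq_fsbigr => e; rewrite inE => te.
by rewrite /pE E_law.
Unshelve. all: by end_near.
Qed.

Lemma bound_le_upd_forest : (bound%:E <= P (upd_forest @^-1` A))%E.
Proof.
pose piece e := stay e `|` \bigcup_(d in out_edges ends v) move e d.
have mmoves e : measurable (\bigcup_(d in out_edges ends v) move e d).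
  by apply: fin_bigcup_measurable => // d _; exact: mmove.
have mpiece e : measurable (piece e) by exact: measurableU (mstay e) (mmoves e).
have mU : measurable (upd_forest @^-1` A).
  rewrite -[_ @^-1` _]setTI; apply: measurable_upd_forest => //.
  exact: sub_sigma_algebra.
have E_piece e w : piece e w -> E w = e by case=> [[]|[d _ [[]]]].
have piece_upd : \bigcup_(e in out_edges ends v) piece e `<=` upd_forest @^-1` A.
  move=> w [e _ [[/= Ew [Aw Kw]]|[d _ [[/= Ew [ns [nF AU]]] /= Dw]]]];
    rewrite /preimage /= /upd_forest Ew.
    by move: Kw; rewrite /upd_trivial /= => ->.
  by rewrite (negbTE ns) (negbTE nF) /= Dw.
apply: le_trans (le_measure _ (mem_set _) (mem_set mU) piece_upd); last first.
  by apply: fin_bigcup_measurable => // e _; exact: mpiece.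
rewrite measure_fin_bigcup //; last first.
  by move=> e e' _ _ [w [/E_piece <- /E_piece <-]].
rewrite /bound -fsumEFin // le_eqVlt; apply/orP; left; apply/eqP/eq_fsbigr => e _.
rewrite measureU //; last first.
  apply/seteqP; split => // w [[_ [_ Kw]] [d _ [[_ [ns [nF _]]] _]]].
  by move: Kw; rewrite /upd_trivial /= (negbTE ns) (negbTE nF).
rewrite EFinD; congr (_ + _)%E.
  have mAK : measurable (A `&` upd_trivial ends e : set (Omega U)).
    exact: measurable_cylinders0 (cylinders0_trivial ends e (or_introl cA)).
  apply: etrans (esym (EF_indep e mAK)).
  by rewrite EFinM /pE !probability_fineK //; exact: mFpre.
rewrite measure_fin_bigcup //; last first.
  by move=> d d' _ _ [w [[_ /= <-] [_ /= <-]]].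
by rewrite -fsumEFin //; apply: eq_fsbigr => d _; rewrite probability_fineK.
Qed.

Lemma le_prob_upd_forest : (P (F @^-1` A) <= P (upd_forest @^-1` A))%E.
Proof.
rewrite -probability_fineK; last by apply: mFpre; exact: sub_sigma_algebra.
by apply: le_trans bound_le_upd_forest; rewrite lee_fin fusf_le_bound.
Qed.

End LowerBound.

Lemma upd_forest_law (A : set (Omega U)) : measurable A ->
  P (upd_forest @^-1` A) = P (F @^-1` A).
Proof.
move=> mA; apply: (eq_law_of_cylinders measurable_upd_forest mF _ mA) => _ [S [s ->]].
apply/esym/(eq_cylinder_law_of_le mF measurable_upd_forest) => B.
exact: le_prob_upd_forest.
Qed.

End UpdateInvariance.

Unset Implicit Arguments.

Theorem lemma2p3 (R : realType) (V : choiceType) (U : countType)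
  (ends : U -> V * V) (c : U -> R) (W : nat -> {fset V})
  (dT : measure_display) (T : measurableType dT) (P : probability T R)
  (F : T -> Omega U) (v : V) (E D : T -> oedge U) :
  network ends c ->
  exhaustion ends W ->
  measurable_fun setT F ->
  (forall e, measurable (E @^-1` [set e])) ->
  (forall d, measurable (D @^-1` [set d])) ->
  (* F is a sample of FUSF_G: UST_{G_n} converges weakly to its law *)
  (forall A, cylinders A ->
     (fun n => ust ends c (W n) A) @ \oo --> fine (P (F @^-1` A))) ->
  (* E emanates from v, with probability proportional to conductance *)
  (forall w, tail ends (E w) = v) ->
  (forall e, tail ends e = v ->
     P (E @^-1` [set e]) = (c e.1 / out_cond ends c v)%:E) ->
  (* E is independent of F *)
  (forall e (A : set (Omega U)), measurable A ->
     P (E @^-1` [set e] `&` F @^-1` A) =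
     (P (E @^-1` [set e]) * P (F @^-1` A))%E) ->
  (* on {E = e, e not a self-loop, e not in F}, D is sampled from the
     conditional law of D(e) given F, i.e. (F, D) has there the limit
     joint law of (T_n, D(T_n, e)) *)
  (forall e d A, ~~ selfloop ends e -> cylinders A ->
     (forall w, A w -> ~~ w e.1) ->
     (fun n => fine (P (E @^-1` [set e])) * ust_dir ends c (W n) e d A)
       @ \oo -->
     fine (P (E @^-1` [set e] `&` F @^-1` A `&` D @^-1` [set d]))) ->
  forall A : set (Omega U), measurable A ->
    P ((fun w => if selfloop ends (E w) || F w (E w).1 then F w
                 else upd (F w) (E w) (D w)) @^-1` A)
    = P (F @^-1` A).
Proof.
move=> G_network W_exhaustion mF mE mD F_fusf E_tail E_law EF_indep D_direction.
exact: upd_forest_law G_network W_exhaustion mF mE mD F_fusf E_tail E_law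
  EF_indep D_direction.
Qed.
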